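(* Let $A\subseteq\mathbb{F}_2^n\setminus\{0\}$ have size $q$, and let $a=\lceil\log(q+1)\rceil$. Then $A$ contains at least \[ \prod_{j=0}^{a-1}(q+1-2^j) \] ordered linearly independent $a$-tuples (i.e., tuples $(v_1,\dots,v_a)\in A^a$ with $v_1,\dots,v_a$ linearly independent over $\mathbb{F}_2$).
   Context: $\log$ denotes the base-$2$ logarithm. *)

From mathcomp Require Import all_boot all_order all_algebra.
Set Implicit Arguments. Unset Strict Implicit. Unset Printing Implicit Defensive.
Import GRing.Theory Num.Theory.

Definition indep_tuples (n a : nat) (A : {set 'rV['F_2]_n}) :
    {set {ffun 'I_a -> 'rV['F_2]_n}} :=
  [set f : {ffun 'I_a -> 'rV['F_2]_n} |
     [forall i, f i \in A] && row_free (\matrix_(i < a) f i)].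

From mathcomp Require Import all_boot all_algebra.

Set Implicit Arguments. Unset Strict Implicit. Unset Printing Implicit Defensive.

Local Open Scope ring_scope.

(* Build the tuples one vector at a time.  An independent k-tuple spans at
   most 2^k - 1 nonzero vectors, so at least q + 1 - 2^k vectors of A extend
   it to an independent (k+1)-tuple, and distinct extensions are distinct
   tuples.  By induction A has at least prod_(j < k) (q + 1 - 2^j) independent
   k-tuples; for k = ceil(log2(q+1)) every factor is positive, so the
   truncated subtraction agrees with the integer one. *)

Section RowSpaceCard.
Variables (F : finFieldType) (k n : nat) (M : 'M[F]_(k, n)).

Lemma card_row_space_le : (#|[set v : 'rV[F]_n | (v <= M)%MS]| <= #|F| ^ k)%N.
Proof.
have /subset_leq_card : [set v : 'rV[F]_n | (v <= M)%MS] \subset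
    [set u *m M | u in [set: 'rV[F]_k]].
  by apply/subsetP => v; rewrite inE => /submxP[u ->]; apply: imset_f.
move/leq_trans; apply; apply: leq_trans (leq_imset_card _ _) _.
by rewrite cardsT card_mx mul1n.
Qed.

Lemma card_row_space_nonzero_le (A : {set 'rV[F]_n}) : 0 \notin A ->
  (#|A :&: [set v | (v <= M)%MS]| <= #|F| ^ k - 1)%N.
Proof.
move=> A0; set S := [set v | _].
have /subset_leq_card : A :&: S \subset S :\ 0.
  apply/subsetP => v; rewrite !inE => /andP[vA ->]; rewrite andbT.
  by apply: contraNneq A0 => <-.
move/leq_trans; apply.
have -> : #|S :\ 0| = (#|S| - 1)%N by rewrite (cardsD1 0 S) inE sub0mx addKn.
exact: leq_sub2r card_row_space_le.
Qed.

End RowSpaceCard.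

Lemma row_free_col_mx (F : fieldType) k n (v : 'rV[F]_n) (M : 'M[F]_(k, n)) :
  row_free M -> ~~ (v <= M)%MS -> row_free (col_mx v M).
Proof.
move=> /eqP rankM vNM; rewrite /row_free eqn_leq rank_leq_row -addsmxE /=.
have : (M < v + M)%MS.
  by rewrite ltmxE addsmxSr; apply: contra vNM; apply: submx_trans (addsmxSl v M).
by rewrite ltmxErank rankM => /andP[].
Qed.

Lemma card_dep_pairs (I J : finType) (P : {set I}) (Q : I -> {set J}) :
  #|[set p : I * J | (p.1 \in P) && (p.2 \in Q p.1)]| = (\sum_(i in P) #|Q i|)%N.
Proof.
rewrite -sum1dep_card -(pair_big_dep (mem P) (fun i => mem (Q i)) (fun _ _ => 1%N)).
by apply: eq_bigr => i _; rewrite sum1_card.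
Qed.

Section FfunCons.
Variables (T : Type) (k : nat).
Implicit Types (v : T) (f : {ffun 'I_k -> T}).

Definition ffun_cons v f : {ffun 'I_k.+1 -> T} :=
  [ffun i : 'I_(1 + k) => if split i is inr j then f j else v].

Lemma ffun_cons0 v f : ffun_cons v f (lshift k (ord0 : 'I_1)) = v.
Proof. by rewrite ffunE (unsplitK (inl ord0 : 'I_1 + 'I_k)). Qed.

Lemma ffun_consS v f j : ffun_cons v f (rshift 1 j) = f j.
Proof. by rewrite ffunE (unsplitK (inr j : 'I_1 + 'I_k)). Qed.

Lemma ffun_cons_inj v w f g : ffun_cons v f = ffun_cons w g -> v = w /\ f = g.
Proof.
move=> eq_cons; split; first by rewrite -(ffun_cons0 v f) eq_cons ffun_cons0.
by apply/ffunP => j; rewrite -(ffun_consS v f) eq_cons ffun_consS.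
Qed.

End FfunCons.

Lemma ffun_cons_mx (R : Type) k n (v : 'rV[R]_n) (f : {ffun 'I_k -> 'rV[R]_n}) :
  \matrix_(i < k.+1) ffun_cons v f i = col_mx v (\matrix_(i < k) f i).
Proof.
apply/matrixP => i j; rewrite !mxE ffunE.
by case: (split (i : 'I_(1 + k))) => [i0|i']; rewrite ?mxE // [i0]ord1.
Qed.

Section IndepTuples.
Variables (n q : nat) (A : {set 'rV['F_2]_n}).
Hypotheses (A0 : 0 \notin A) (cardA : #|A| = q).

Lemma ffun_cons_indep k (f : {ffun 'I_k -> 'rV['F_2]_n}) v :
  f \in indep_tuples k A -> v \in A :\: [set u | (u <= \matrix_(i < k) f i)%MS] ->
  ffun_cons v f \in indep_tuples k.+1 A.
Proof.
rewrite !inE => /andP[/forallP fA freef] /andP[vNf vA].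
rewrite ffun_cons_mx row_free_col_mx // andbT.
by apply/forallP => i; rewrite ffunE; case: split.
Qed.

Lemma card_indep_tuplesS k :
  (#|indep_tuples k A| * (q.+1 - 2 ^ k) <= #|indep_tuples k.+1 A|)%N.
Proof.
set T := indep_tuples k A.
pose ext (f : {ffun 'I_k -> 'rV['F_2]_n}) :=
  A :\: [set u | (u <= \matrix_(i < k) f i)%MS].
pose P := [set p | (p.1 \in T) && (p.2 \in ext p.1)].
have card_ext f : (q.+1 - 2 ^ k <= #|ext f|)%N.
  rewrite cardsD cardA -[(2 ^ k)%N]prednK ?expn_gt0 // subSS -subn1 leq_sub2l //.
  by have := card_row_space_nonzero_le (\matrix_(i < k) f i) A0; rewrite card_Fp.
apply: (@leq_trans #|P|).
  by rewrite /P card_dep_pairs -sum_nat_const leq_sum.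
have cons_inj : {in P &, injective (fun p => ffun_cons p.2 p.1)}.
  by move=> [f v] [g w] _ _ /= eq_cons; have [-> ->] := ffun_cons_inj eq_cons.
rewrite -(card_in_imset cons_inj).
apply/subset_leq_card/subsetP => _ /imsetP[[f v] + ->].
by rewrite inE => /andP[]; apply: ffun_cons_indep.
Qed.

Lemma card_indep_tuples_ge k :
  (\prod_(0 <= j < k) (q.+1 - 2 ^ j) <= #|indep_tuples k A|)%N.
Proof.
elim: k => [|k IHk].
  rewrite big_geq // card_gt0; apply/set0Pn; exists [ffun i : 'I_0 => 0].
  rewrite inE; apply/andP; split; first by apply/forallP => -[].
  by rewrite /row_free -leqn0 rank_leq_row.
rewrite big_nat_recr //=; apply: leq_trans (card_indep_tuplesS k).
by rewrite leq_mul2r IHk orbT.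
Qed.

End IndepTuples.

Lemma expn_lt_up_log p m j : (1 < p -> j < up_log p m -> p ^ j < m)%N.
Proof.
move=> p_gt1 j_lt; rewrite ltnNge; apply: contraTN j_lt => /(up_log_min p_gt1).
by rewrite leqNgt.
Qed.

Theorem lemma2p1 (n q : nat) (A : {set 'rV['F_2]_n}) :
  (0 : 'rV['F_2]_n)%R \notin A -> #|A| = q ->
  ((\prod_(0 <= j < up_log 2 q.+1) ((q.+1)%:Z - (2 ^ j)%:Z)) <=
     (#|indep_tuples (up_log 2 q.+1) A|)%:Z)%R.
Proof.
move=> A0 cardA.
have -> : \prod_(0 <= j < up_log 2 q.+1) ((q.+1)%:Z - (2 ^ j)%:Z) =
          (\prod_(0 <= j < up_log 2 q.+1) (q.+1 - 2 ^ j))%N%:Z.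
  rewrite (big_morph Posz PoszM (erefl (Posz 1))).
  apply: eq_big_nat => j /andP[_ j_lt].
  by rewrite subzn // ltnW // expn_lt_up_log.
by rewrite lez_nat card_indep_tuples_ge.
Qed.
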